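(* Let $d\ge 1$ and let $X=\{x_1,\dots,x_N\}$ be a finite nonempty subset of the unit sphere $S^d\subset\mathbb{R}^{d+1}$ satisfying \[ \frac{1}{|X|^2}\sum_{x_i,x_j\in X}(x_i,x_j)^2=\frac{1}{d+1},\qquad \frac{1}{|X|^2}\sum_{x_i,x_j\in X}(x_i,x_j)^4=\frac{3}{(d+3)(d+1)}, \] where both sums run over all ordered pairs $(i,j)$, $1\le i,j\le N$ (including $i=j$). Then the multiset $\widetilde{G_X}:=\{G_{x_1},\dots,G_{x_N}\}\cup\{-G_{x_1},\dots,-G_{x_N}\}$ (of $2N$ points, counted with multiplicity) is a spherical $3$-design in the unit sphere $S^{D-1}$ of $\mathrm{Harm}_2(S^d)\cong\mathbb{R}^D$, where $D=\dim \mathrm{Harm}_2(S^d)=d(d+3)/2$.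
   Context: $(\cdot,\cdot)$ is the standard inner product on $\mathbb{R}^{d+1}$. $\mathrm{Harm}_2(S^d)$ denotes the real vector space of restrictions to $S^d$ of homogeneous polynomials $P$ of degree $2$ on $\mathbb{R}^{d+1}$ that are harmonic ($\sum_{j}\partial^2P/\partial x_j^2=0$); its dimension is $D=d(d+3)/2$. Equip it with the inner product $\langle P,Q\rangle=\int_{S^d}P(x)Q(x)\,d\sigma(x)$, $\sigma$ the normalized surface measure, and identify it with $\mathbb{R}^D$ via an orthonormal basis. For $x\in S^d$ let $K_x\in\mathrm{Harm}_2(S^d)$ be the reproducing element ($\langle K_x,Q\rangle=Q(x)$ for all $Q$), and set $G_x=K_x/\|K_x\|$; then $G_x$ is a unit vector and $\langle G_x,G_y\rangle=g_{2,d}((x,y))$ with $g_{2,d}(t)=\frac{d+1}{d}t^2-\frac1d$. A finite nonempty multiset $Y$ in a unit sphere $S^{m}\subset\mathbb{R}^{m+1}$ is a spherical $t$-design if $\frac{1}{|Y|}\sum_{y\in Y}f(y)=\int_{S^m}f\,d\sigma$ for every polynomial $f$ on $\mathbb{R}^{m+1}$ of degree at most $t$ (points counted with multiplicity, $\sigma$ normalized surface measure). *)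

From HB Require Import structures.
From mathcomp Require Import all_boot all_order all_algebra.
Set Implicit Arguments. Unset Strict Implicit. Unset Printing Implicit Defensive.
Import Order.TTheory GRing.Theory Num.Theory.
Local Open Scope ring_scope.

Section Defs.
Variable R : rcfType.

Definition dotv n (x y : 'rV[R]_n) : R := \sum_(i < n) x 0 i * y 0 i.

Definition on_sphere n (x : 'rV[R]_n) : bool := dotv x x == 1.

(** Polynomials on R^n, represented as finite lists of monomials
    (coefficient, exponent vector). *)
Definition expo n := {ffun 'I_n -> nat}.
Definition polyR n := seq (R * expo n).

Definition mono_eval n (a : expo n) (x : 'rV[R]_n) : R := \prod_(i < n) x 0 i ^+ a i.
Definition peval n (p : polyR n) (x : 'rV[R]_n) : R :=
  \sum_(m <- p) m.1 * mono_eval m.2 x.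
Definition expo_deg n (a : expo n) : nat := (\sum_(i < n) a i)%N.
Definition pdeg_le n (p : polyR n) (t : nat) : bool :=
  all (fun m => expo_deg m.2 <= t)%N p.
Definition padd_expo n (a b : expo n) : expo n := [ffun i => (a i + b i)%N].
Definition pmul n (p q : polyR n) : polyR n :=
  [seq (u.1 * v.1, padd_expo u.2 v.2) | u <- p, v <- q].

(** Integral of the monomial x^a over S^(n-1) against the normalized surface
    measure: 0 unless all a_i are even; otherwise, with a_i = 2 b_i,
    prod_i (2b_i - 1)!! / (n (n+2) ... (n + 2|b| - 2)). *)
Definition sphere_mono_avg n (a : expo n) : R :=
  if [forall i, ~~ odd (a i)] then
    (\prod_(i < n) \prod_(j < (a i)./2) ((2 * j).+1)%:R) /
    (\prod_(k < (expo_deg a)./2) (n + 2 * k)%:R)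
  else 0.

Definition sphere_avg n (p : polyR n) : R :=
  \sum_(m <- p) m.1 * sphere_mono_avg m.2.

(** Spherical t-design in S^(n-1) subset R^n (multiset = seq). *)
Definition spherical_design n (t : nat) (Y : seq 'rV[R]_n) : Prop :=
  [/\ Y != [::], all (@on_sphere n) Y &
    forall p : polyR n, pdeg_le p t ->
      (size Y)%:R^-1 * \sum_(y <- Y) peval p y = sphere_avg p].

Definition unit_expo n (i : 'I_n) : expo n := [ffun k => (k == i : nat)].
Definition quad_poly m (A : 'M[R]_m) : polyR m :=
  [seq (A i j, padd_expo (unit_expo i) (unit_expo j)) | i <- enum 'I_m, j <- enum 'I_m].

(** Harm_2 on S^(m-1): homogeneous quadratic polynomials x A x^T, A symmetric
    (unique representative), harmonic (Laplacian = 2 tr A = 0). *)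
Definition harm2 m (A : 'M[R]_m) : bool := (A^T == A) && (\tr A == 0).

Definition harm_inner m (A B : 'M[R]_m) : R :=
  sphere_avg (pmul (quad_poly A) (quad_poly B)).

End Defs.

From HB Require Import structures.
From mathcomp Require Import all_boot all_order all_algebra.
From mathcomp Require Import ring lra.
Set Implicit Arguments. Unset Strict Implicit. Unset Printing Implicit Defensive.
Import Order.TTheory GRing.Theory Num.Theory.
Local Open Scope ring_scope.

(** On [Harm_2] the inner product is [2 / (n (n + 2))] times the Frobenius
    product (this is the integral of quartic monomials over the sphere), so the
    reproducing kernel is [K_x = n (n + 2) / 2 (x^T x - I / n)] and
    [<G_x, G_y> = ((d + 1) (x, y)^2 - 1) / d].  The two moment hypotheses then
    say that the frame potential [sum_(x, y) <G_x, G_y>^2] of the unit vectors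
    [G_x] equals [N^2 / D], its minimum, which forces the tight frame identity
    [sum_x G_x G_x^T = (N / D) I].  On the antipodal multiset [+-G_x] every odd
    monomial averages to 0 and [y_i y_j] averages to [delta_ij / D], exactly as
    on the sphere, hence it is a 3-design. *)

Section SphereMoments.
Variable R : rcfType.

Definition quadratic_expo n (i j : 'I_n) : expo n := padd_expo (unit_expo i) (unit_expo j).

Definition quartic_expo n (i j k l : 'I_n) : expo n :=
  padd_expo (quadratic_expo i j) (quadratic_expo k l).

Definition pairings n (i j k l : 'I_n) : nat :=
  ((i == j) * (k == l) + (i == k) * (j == l) + (i == l) * (j == k))%N.

Lemma quadratic_expoE n (i j m : 'I_n) : quadratic_expo i j m = ((m == i) + (m == j))%N.
Proof. by rewrite !ffunE. Qed.

Lemma quartic_expoE n (i j k l m : 'I_n) :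
  quartic_expo i j k l m = ((m == i) + (m == j) + ((m == k) + (m == l)))%N.
Proof. by rewrite ffunE !quadratic_expoE. Qed.

Lemma sum_nat_eq n (i : 'I_n) : (\sum_(m < n) (m == i : nat))%N = 1%N.
Proof. by rewrite (bigD1 i) //= eqxx big1 // => m /negPf ->. Qed.

Lemma expo_deg_quadratic n (i j : 'I_n) : expo_deg (quadratic_expo i j) = 2%N.
Proof.
by rewrite /expo_deg (eq_bigr _ (fun m _ => quadratic_expoE i j m)) big_split /= !sum_nat_eq.
Qed.

Lemma expo_deg_quartic n (i j k l : 'I_n) : expo_deg (quartic_expo i j k l) = 4%N.
Proof.
by rewrite /expo_deg (eq_bigr _ (fun m _ => quartic_expoE i j k l m)) !big_split /= !sum_nat_eq.
Qed.

Lemma expo_deg0 n (a : expo n) : expo_deg a = 0%N -> a = [ffun => 0%N].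
Proof.
move/eqP; rewrite /expo_deg sum_nat_eq0 => /forallP a0; apply/ffunP => m.
by rewrite ffunE; apply/eqP; exact: (implyP (a0 m)).
Qed.

Lemma expo_degS n (a : expo n) k : expo_deg a = k.+1 ->
  exists i, exists2 b : expo n, a = padd_expo (unit_expo i) b & expo_deg b = k.
Proof.
move=> deg_a; have [i ai_gt0|a0] := pickP (fun i => 0 < a i)%N; last first.
  suff : expo_deg a = 0%N by rewrite deg_a.
  by rewrite /expo_deg big1 // => m _; move: (a0 m); case: (a m).
pose b : expo n := [ffun m => (a m - (m == i))%N].
have a_eq : a = padd_expo (unit_expo i) b.
  apply/ffunP => m; rewrite !ffunE; case: (eqVneq m i) => [->|] /=.
    by rewrite add1n subn1 prednK.
  by rewrite add0n subn0.
clearbody b; exists i, b => //; move: deg_a; rewrite a_eq /expo_deg.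
by under eq_bigr => m _ do rewrite !ffunE; rewrite big_split /= sum_nat_eq => -[].
Qed.

Lemma expo_deg2 n (a : expo n) : expo_deg a = 2%N -> exists i j, a = quadratic_expo i j.
Proof.
case/expo_degS => i [b -> /expo_degS [j [c -> /expo_deg0 ->]]].
by exists i, j; apply/ffunP => m; rewrite !ffunE addn0.
Qed.

Lemma odd_expo_deg n (a : expo n) : odd (expo_deg a) -> exists m, odd (a m).
Proof.
move=> odd_deg; apply/existsP; apply: contraTT odd_deg; rewrite negb_exists => /forallP ev.
by rewrite /expo_deg; elim/big_ind: _ => // x y; rewrite oddD => /negPf-> /negPf->.
Qed.

Definition expo_dfact n (a : expo n) : R :=
  \prod_(m < n) \prod_(j < (a m)./2) ((2 * j).+1)%:R.

Definition sphere_mono_numer n (a : expo n) : R :=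
  if [forall m, ~~ odd (a m)] then expo_dfact a else 0.

Lemma sphere_mono_avgE n (a : expo n) : sphere_mono_avg R a =
  sphere_mono_numer a / \prod_(k < (expo_deg a)./2) (n + 2 * k)%:R.
Proof. by rewrite /sphere_mono_avg /sphere_mono_numer; case: ifP; rewrite ?mul0r. Qed.

Lemma expo_dfact_le3 n (a : expo n) : (forall m, a m <= 3)%N -> expo_dfact a = 1.
Proof.
move=> a_le3; rewrite /expo_dfact big1 // => m _.
have : ((a m)./2 <= 1)%N by move: (a_le3 m); case: (a m) => [|[|[|[|]]]].
by case: ((a m)./2) => [|[|//]] _; rewrite ?big_ord0 // big_ord1 muln0.
Qed.

Lemma sphere_mono_numer_even n (a : expo n) : (forall m, a m = 0 \/ a m = 2)%N ->
  sphere_mono_numer a = 1.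
Proof.
move=> a02; rewrite /sphere_mono_numer ifT; last by apply/forallP => m; case: (a02 m) => ->.
by apply: expo_dfact_le3 => m; case: (a02 m) => ->.
Qed.

Lemma sphere_mono_numer_odd n (a : expo n) m : odd (a m) ->
  sphere_mono_numer a = 0.
Proof.
by move=> odd_am; rewrite /sphere_mono_numer ifF //; apply/negbTE/forallPn; exists m; rewrite negbK.
Qed.

Lemma sphere_mono_numer_pairs n (a : expo n) (p q : 'I_n) : p != q ->
  (forall m, a m = (m == p) + (m == p) + ((m == q) + (m == q)))%N ->
  sphere_mono_numer a = 1.
Proof.
move=> pq aE; apply: sphere_mono_numer_even => m; rewrite aE.
have [->|_] := eqVneq m p; first by rewrite (negPf pq); right.
by case: (m == q); [right|left].
Qed.

Lemma sphere_mono_avg_odd n (a : expo n) : odd (expo_deg a) -> sphere_mono_avg R a = 0.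
Proof.
by case/odd_expo_deg => m /sphere_mono_numer_odd; rewrite sphere_mono_avgE => ->; rewrite mul0r.
Qed.

Lemma sphere_mono_avg0 n : sphere_mono_avg R ([ffun=> 0%N] : expo n) = 1.
Proof.
have deg0 : expo_deg ([ffun=> 0%N] : expo n) = 0%N by rewrite /expo_deg big1 // => m; rewrite ffunE.
rewrite sphere_mono_avgE deg0 big_ord0 divr1 sphere_mono_numer_even // => m.
by rewrite ffunE; left.
Qed.

Lemma sphere_mono_avg_quadratic n (i j : 'I_n) :
  sphere_mono_avg R (quadratic_expo i j) = (i == j)%:R / n%:R.
Proof.
rewrite sphere_mono_avgE expo_deg_quadratic big_ord1 muln0 addn0; congr (_ / _).
have [<-|ij] := eqVneq i j.
  by rewrite sphere_mono_numer_even // => m; rewrite quadratic_expoE; case: (m == i); [right|left].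
by rewrite (sphere_mono_numer_odd (m := i)) // quadratic_expoE eqxx (negPf ij).
Qed.

Lemma sphere_mono_avg_quartic n (i j k l : 'I_n) :
  sphere_mono_avg R (quartic_expo i j k l) = (pairings i j k l)%:R / (n * (n + 2))%:R.
Proof.
rewrite sphere_mono_avgE expo_deg_quartic /= !big_ord_recl big_ord0 mulr1 -natrM muln0 addn0 muln1.
congr (_ / _); rewrite /pairings.
(* Unless the four indices pair up, some exponent is odd. *)
have [<-|ij] := eqVneq i j; [have [<-|kl] := eqVneq k l | have [<-|ik] := eqVneq i k].
- have [<-|ik] := eqVneq i k.
    rewrite /sphere_mono_numer ifT; last first.
      by apply/forallP => m; rewrite quartic_expoE; case: (m == i).
    rewrite /expo_dfact (bigD1 i) //= [X in _ * X]big1 => [|m /negPf mi]; last first.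
      by rewrite quartic_expoE mi big_ord0.
    by rewrite quartic_expoE eqxx /= !big_ord_recl big_ord0 !mulr1 -natrM.
  by rewrite (sphere_mono_numer_pairs ik) ?eqxx ?(negPf ik) // => m; rewrite quartic_expoE.
- rewrite (sphere_mono_numer_odd (m := k)); last first.
    by rewrite quartic_expoE eqxx (negPf kl) !oddD addbb.
  have [ik|_] := eqVneq i k; last by rewrite !muln0 mul0n.
  by rewrite -ik in kl; rewrite (negPf kl).
- have [<-|jl] := eqVneq j l.
    rewrite (sphere_mono_numer_pairs ij) ?eqxx ?(negPf ij) // => m.
    by rewrite quartic_expoE addnACA.
  rewrite (sphere_mono_numer_odd (m := j)); last first.
    by rewrite quartic_expoE eqxx [j == i]eq_sym (negPf ij) (negPf jl).
  by rewrite [j == i]eq_sym (negPf ij) !muln0 mul0n.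
- have [<-|il] := eqVneq i l; last first.
    rewrite (sphere_mono_numer_odd (m := i)); last first.
      by rewrite quartic_expoE eqxx (negPf ij) (negPf ik) (negPf il).
    by rewrite !mul0n.
  have [<-|jk] := eqVneq j k.
    rewrite (sphere_mono_numer_pairs ij) ?eqxx ?(negPf ij) // => m.
    by rewrite quartic_expoE (addnC (m == j)) addnACA.
  rewrite (sphere_mono_numer_odd (m := j)); last first.
    by rewrite quartic_expoE eqxx [j == i]eq_sym (negPf ij) (negPf jk).
  by rewrite !mul0n muln0.
Qed.
End SphereMoments.

Section HarmonicInnerProduct.
Variable R : rcfType.

Lemma sum_delta_mull n (F : 'I_n -> R) i : \sum_j (i == j)%:R * F j = F i.
Proof.
by rewrite (bigD1 i) //= eqxx mul1r big1 ?addr0 // => j /negPf; rewrite eq_sym => ->; rewrite mul0r.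
Qed.

Lemma sum_mul_delta n (F : 'I_n -> R) i : \sum_j F j * (i == j)%:R = F i.
Proof. by rewrite -[RHS](sum_delta_mull F); apply: eq_bigr => j _; rewrite mulrC. Qed.

Lemma harm_innerE n (A B : 'M[R]_n) : harm_inner A B =
  \sum_i \sum_j \sum_k \sum_l A i j * B k l * sphere_mono_avg R (quartic_expo i j k l).
Proof.
rewrite /harm_inner /sphere_avg /pmul big_allpairs_dep /quad_poly big_allpairs_dep big_enum.
apply: eq_bigr => i _; rewrite big_enum; apply: eq_bigr => j _.
rewrite big_allpairs_dep big_enum; apply: eq_bigr => k _; exact: big_enum.
Qed.

Definition frob n (A B : 'M[R]_n) : R := \sum_i \sum_j A i j * B i j.

Lemma frobC n (A B : 'M[R]_n) : frob A B = frob B A.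
Proof. by apply: eq_bigr => i _; apply: eq_bigr => j _; rewrite mulrC. Qed.

Lemma frobBl n (A B C : 'M[R]_n) : frob (A - B) C = frob A C - frob B C.
Proof.
rewrite /frob -sumrB; apply: eq_bigr => i _; rewrite -sumrB; apply: eq_bigr => j _.
by rewrite !mxE mulrBl.
Qed.

Lemma frobZl n a (A B : 'M[R]_n) : frob (a *: A) B = a * frob A B.
Proof.
rewrite /frob mulr_sumr; apply: eq_bigr => i _; rewrite mulr_sumr; apply: eq_bigr => j _.
by rewrite !mxE mulrA.
Qed.

Lemma frobZr n a (A B : 'M[R]_n) : frob A (a *: B) = a * frob A B.
Proof. by rewrite frobC frobZl frobC. Qed.

Lemma frob_sumr n (I : finType) (c : I -> R) (E : I -> 'M[R]_n) (A : 'M[R]_n) :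
  frob A (\sum_k c k *: E k) = \sum_k c k * frob A (E k).
Proof.
rewrite /frob; under eq_bigr => i _ do under eq_bigr => j _ do rewrite summxE big_distrr /=.
under eq_bigr => i _ do rewrite exchange_big /=.
rewrite exchange_big /=; apply: eq_bigr => k _.
rewrite mulr_sumr; apply: eq_bigr => i _; rewrite mulr_sumr; apply: eq_bigr => j _.
by rewrite mxE mulrCA.
Qed.

Lemma sum_pairings n (B : 'M[R]_n) i j :
  \sum_k \sum_l B k l * (pairings i j k l)%:R = (i == j)%:R * \tr B + B i j + B j i.
Proof.
rewrite /pairings.
under eq_bigr => k _ do under eq_bigr => l _ do rewrite !natrD !natrM !mulrDr.
under eq_bigr => k _ do rewrite !big_split /=.
rewrite !big_split /=; congr (_ + _ + _).
- under eq_bigr => k _ do under eq_bigr => l _ do rewrite mulrCA.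
  by under eq_bigr => k _ do rewrite -mulr_sumr sum_mul_delta; rewrite -mulr_sumr.
- under eq_bigr => k _ do under eq_bigr => l _ do rewrite mulrCA.
  under eq_bigr => k _ do rewrite -mulr_sumr (sum_mul_delta (B k)).
  exact: (sum_delta_mull (B^~ j)).
- under eq_bigr => k _ do under eq_bigr => l _ do rewrite [X in _ * X]mulrC mulrCA.
  under eq_bigr => k _ do rewrite -mulr_sumr (sum_mul_delta (B k)).
  exact: (sum_delta_mull (B^~ i)).
Qed.

Lemma harm_inner_frob n (A B : 'M[R]_n) : harm2 B ->
  harm_inner A B = 2 / (n * (n + 2))%:R * frob A B.
Proof.
case/andP => /eqP symB /eqP trB.
rewrite harm_innerE /frob mulr_sumr; apply: eq_bigr => i _.
rewrite mulr_sumr; apply: eq_bigr => j _.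
rewrite (eq_bigr (fun k => A i j / (n * (n + 2))%:R * \sum_l B k l * (pairings i j k l)%:R)).
  rewrite -mulr_sumr sum_pairings trB mulr0 add0r.
  have -> : B j i = B i j by rewrite -{1}symB mxE.
  ring.
by move=> k _; rewrite mulr_sumr; apply: eq_bigr => l _; rewrite sphere_mono_avg_quartic; ring.
Qed.
End HarmonicInnerProduct.

Section ZonalHarmonic.
Variable R : rcfType.

Lemma harm2Z n a (A : 'M[R]_n) : harm2 A -> harm2 (a *: A).
Proof.
by case/andP => /eqP symA /eqP trA; rewrite /harm2 linearZ /= symA mxtraceZ trA mulr0 !eqxx.
Qed.

Lemma harm2B n (A B : 'M[R]_n) : harm2 A -> harm2 B -> harm2 (A - B).
Proof.
case/andP => /eqP symA /eqP trA /andP [/eqP symB /eqP trB].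
by rewrite /harm2 linearB /= symA symB raddfB /= trA trB subr0 !eqxx.
Qed.

Lemma harm_innerZ n a b (A B : 'M[R]_n) : harm2 B ->
  harm_inner (a *: A) (b *: B) = a * b * harm_inner A B.
Proof. by move=> hB; rewrite !harm_inner_frob ?harm2Z // frobZl frobZr; ring. Qed.

Lemma dotv_mulmx n (x y : 'rV[R]_n) : (x *m y^T) 0 0 = dotv x y.
Proof. by rewrite mxE; apply: eq_bigr => i _; rewrite mxE. Qed.

Lemma dotvC n (x y : 'rV[R]_n) : dotv x y = dotv y x.
Proof. by apply: eq_bigr => i _; rewrite mulrC. Qed.

Lemma on_sphere_dim_gt0 n (y : 'rV[R]_n) : on_sphere y -> (0 < n)%N.
Proof. by case: n y => // y; rewrite /on_sphere /dotv big_ord0 eq_sym oner_eq0. Qed.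

Definition zonal_mx n (y : 'rV[R]_n) : 'M[R]_n := y^T *m y - n%:R^-1 *: 1%:M.

Lemma zonal_mxE n (y : 'rV[R]_n) i j :
  zonal_mx y i j = y 0 i * y 0 j - (i == j)%:R / n%:R.
Proof. by rewrite !mxE big_ord1 !mxE [_^-1 * _]mulrC. Qed.

Lemma harm2_zonal_mx n (y : 'rV[R]_n) : on_sphere y -> harm2 (zonal_mx y).
Proof.
move=> y1; have n_gt0 := on_sphere_dim_gt0 y1; apply/andP; split.
  by apply/eqP/matrixP => i j; rewrite mxE !zonal_mxE mulrC eq_sym.
rewrite /mxtrace; under eq_bigr => i _ do rewrite zonal_mxE eqxx /= mulr1n div1r.
rewrite sumrB sumr_const card_ord -[_^-1 *+ _]mulr_natr mulVf ?pnatr_eq0 -?lt0n //.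
by rewrite -/(dotv y y) (eqP y1) subrr.
Qed.

Lemma frob_zonal_mx n (y : 'rV[R]_n) (Q : 'M[R]_n) : \tr Q = 0 ->
  frob (zonal_mx y) Q = (y *m Q *m y^T) 0 0.
Proof.
move=> trQ; rewrite /frob.
have diag_sum i : \sum_j (i == j)%:R / n%:R * Q i j = Q i i / n%:R.
  rewrite -[RHS](sum_delta_mull (fun j => Q i j / n%:R) i).
  by apply: eq_bigr => j _; rewrite mulrAC mulrA.
under eq_bigr => i _ do under eq_bigr => j _ do rewrite zonal_mxE mulrBl.
under eq_bigr => i _ do rewrite sumrB diag_sum.
rewrite sumrB -mulr_suml -/(\tr Q) trQ mul0r subr0 mxE.
rewrite exchange_big; apply: eq_bigr => j _; rewrite !mxE mulr_suml; apply: eq_bigr => i _.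
by rewrite mulrAC.
Qed.

Lemma frob_zonal_zonal n (x y : 'rV[R]_n) : on_sphere x -> on_sphere y ->
  frob (zonal_mx x) (zonal_mx y) = dotv x y ^+ 2 - n%:R^-1.
Proof.
move=> x1 y1; rewrite frob_zonal_mx; last by case/andP: (harm2_zonal_mx y1) => _ /eqP.
rewrite /zonal_mx mulmxBr mulmxBl mulmxA -mulmxA -scalemxAr mulmx1 -scalemxAl.
rewrite mxE [X in _ + X]mxE [X in _ - X]mxE mxE big_ord1 !dotv_mulmx.
by rewrite (eqP x1) mulr1 [dotv y x]dotvC expr2.
Qed.

Lemma harm_inner_zonal n (x y : 'rV[R]_n) : on_sphere x -> on_sphere y ->
  harm_inner (zonal_mx x) (zonal_mx y) = 2 / (n * (n + 2))%:R * (dotv x y ^+ 2 - n%:R^-1).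
Proof. by move=> x1 y1; rewrite harm_inner_frob ?harm2_zonal_mx // frob_zonal_zonal. Qed.
End ZonalHarmonic.

Section HarmonicBasis.
Variables (R : rcfType) (n D : nat) (E : 'I_D -> 'M[R]_n).
Hypothesis harm2E : forall i, harm2 (E i).
Hypothesis harm2_span : forall Q, harm2 Q -> Q = \sum_i harm_inner Q (E i) *: E i.

Lemma harm_inner_parseval (A B : 'M[R]_n) : harm2 B ->
  harm_inner A B = \sum_i harm_inner A (E i) * harm_inner B (E i).
Proof.
move=> harmB; rewrite harm_inner_frob // {1}(harm2_span harmB) frob_sumr mulr_sumr.
by apply: eq_bigr => i _; rewrite (harm_inner_frob A (harm2E i)); ring.
Qed.

Lemma reproducing_kernelE (K : 'M[R]_n) y : on_sphere y -> harm2 K ->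
  (forall Q, harm2 Q -> harm_inner K Q = (y *m Q *m y^T) 0 0) ->
  K = ((n * (n + 2))%:R / 2) *: zonal_mx y.
Proof.
move=> y1 harmK reprK; set c := _ / 2.
have n_gt0 : (0 : R) < n%:R by rewrite ltr0n (on_sphere_dim_gt0 y1).
have harm_diff : harm2 (K - c *: zonal_mx y) by rewrite harm2B ?harm2Z ?harm2_zonal_mx.
apply/subr0_eq; rewrite (harm2_span harm_diff) big1 // => i _.
have /andP [_ /eqP trEi] := harm2E i.
rewrite harm_inner_frob // frobBl frobZl frob_zonal_mx // -reprK // harm_inner_frob //.
by rewrite /c (_ : _ * _ = 0) ?scale0r //; field; rewrite !lt0r_neq0 ?addr_gt0.
Qed.

Lemma dotv_coord (A B : 'M[R]_n) : harm2 B ->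
  dotv (\row_i harm_inner A (E i)) (\row_i harm_inner B (E i)) = harm_inner A B.
Proof.
by move=> harmB; rewrite (harm_inner_parseval _ harmB); apply: eq_bigr => i _; rewrite !mxE.
Qed.

Section ReproducingKernel.
Variable K : 'rV[R]_n -> 'M[R]_n.
Hypothesis harm2K : forall x, on_sphere x -> harm2 (K x).
Hypothesis K_repr : forall x, on_sphere x ->
  forall Q, harm2 Q -> harm_inner (K x) Q = (x *m Q *m x^T) 0 0.

Lemma kernelE x : on_sphere x -> K x = ((n * (n + 2))%:R / 2) *: zonal_mx x.
Proof. by move=> x1; apply: reproducing_kernelE; [exact: x1|exact: harm2K|exact: K_repr]. Qed.

Lemma harm_inner_kernel x y : on_sphere x -> on_sphere y ->
  harm_inner (K x) (K y) = (n * (n + 2))%:R / 2 * (dotv x y ^+ 2 - n%:R^-1).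
Proof.
move=> x1 y1; have n_gt0 : (0 : R) < n%:R by rewrite ltr0n (on_sphere_dim_gt0 x1).
rewrite !kernelE // harm_innerZ ?harm2_zonal_mx // harm_inner_zonal //.
by rewrite natrM natrD; field; rewrite !lt0r_neq0 ?addr_gt0.
Qed.

Lemma harm_inner_normalized_kernel x y : (1 < n)%N -> on_sphere x -> on_sphere y ->
  let G z := (Num.sqrt (harm_inner (K z) (K z)))^-1 *: K z in
  harm_inner (G x) (G y) = (n%:R * dotv x y ^+ 2 - 1) / (n%:R - 1).
Proof.
move=> n_gt1 x1 y1 G; have n_gt1R : (1 : R) < n%:R by rewrite ltr1n.
have norm_K z : on_sphere z -> harm_inner (K z) (K z) = (n * (n + 2))%:R / 2 * (1 - n%:R^-1).
  by move=> z1; rewrite harm_inner_kernel // (eqP z1) expr1n.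
have norm_gt0 : 0 < (n * (n + 2))%:R / 2 * (1 - n%:R^-1) :> R.
  rewrite natrM natrD; apply: mulr_gt0; first by apply: divr_gt0 => //; apply: mulr_gt0; lra.
  by rewrite subr_gt0 invf_lt1 //; lra.
rewrite /G harm_innerZ ?harm2K // !norm_K // harm_inner_kernel // -invfM -expr2 sqr_sqrtr ?ltW //.
by rewrite natrM natrD; field; rewrite !lt0r_neq0 ?subr_gt0 ?addr_gt0 //; lra.
Qed.
End ReproducingKernel.
End HarmonicBasis.

Section AntipodalDesign.
Variables (R : rcfType) (D : nat).
Implicit Types (Z : seq 'rV[R]_D) (a : expo D) (z : 'rV[R]_D).

Lemma mono_evalN a z : mono_eval a (- z) = (-1) ^+ expo_deg a * mono_eval a z.
Proof.
rewrite /mono_eval /expo_deg -prodrXr -big_split /=; apply: eq_bigr => i _.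
by rewrite mxE; exact: exprNn.
Qed.

Lemma mono_eval0 z : mono_eval [ffun=> 0%N] z = 1.
Proof. by rewrite /mono_eval big1 // => i _; rewrite ffunE. Qed.

Lemma mono_eval_quadratic (i j : 'I_D) z : mono_eval (quadratic_expo i j) z = z 0 i * z 0 j.
Proof.
have prod_unit k : \prod_(m < D) z 0 m ^+ (m == k) = z 0 k.
  by rewrite (bigD1 k) //= eqxx big1 ?mulr1 // => m /negPf ->.
rewrite /mono_eval; under eq_bigr do rewrite quadratic_expoE exprD.
by rewrite big_split /= !prod_unit.
Qed.

Lemma sum_mono_eval_antipodal Z a :
  \sum_(y <- Z ++ [seq - z | z <- Z]) mono_eval a y =
  (1 + (-1) ^+ expo_deg a) * \sum_(z <- Z) mono_eval a z.
Proof.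
rewrite big_cat /= big_map mulrDl mul1r mulr_sumr.
by under [X in _ + X]eq_bigr do rewrite mono_evalN.
Qed.

Lemma frame_potentialE Z : \sum_i \sum_j (\sum_(z <- Z) z 0 i * z 0 j) ^+ 2 =
  \sum_(z <- Z) \sum_(w <- Z) dotv z w ^+ 2.
Proof.
under eq_bigr => i _ do under eq_bigr => j _ do rewrite expr2 mulr_suml.
under eq_bigr => i _ do under eq_bigr => j _ do under eq_bigr => z _ do rewrite mulr_sumr.
under eq_bigr => i _ do rewrite exchange_big /=.
rewrite exchange_big /=; apply: eq_bigr => z _.
under eq_bigr => i _ do rewrite exchange_big /=.
rewrite exchange_big /=; apply: eq_bigr => w _.
rewrite expr2 mulr_suml; apply: eq_bigr => i _.
by rewrite mulr_sumr; apply: eq_bigr => j _; ring.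
Qed.

Lemma tight_frame_of_potential Z : all (@on_sphere R D) Z ->
  \sum_(z <- Z) \sum_(w <- Z) dotv z w ^+ 2 = (size Z)%:R ^+ 2 / D%:R ->
  forall i j, \sum_(z <- Z) z 0 i * z 0 j = (i == j)%:R * ((size Z)%:R / D%:R).
Proof.
move=> /allP Z1 potZ i j.
have D_neq0 : D%:R != 0 :> R by rewrite pnatr_eq0 -lt0n (leq_ltn_trans (leq0n i) (ltn_ord i)).
set N := (size Z)%:R; set c := N / D%:R; set M := fun i j => \sum_(z <- Z) z 0 i * z 0 j.
have trM : \sum_k \sum_l (k == l)%:R * M k l = N.
  under eq_bigr => k _ do rewrite sum_delta_mull.
  rewrite /M exchange_big /= /N -sum1_size natr_sum; apply: eq_big_seq => z /Z1 /eqP.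
  by rewrite /dotv => ->.
have card_delta : \sum_(k < D) \sum_(l < D) (k == l)%:R = D%:R :> R.
  rewrite (eq_bigr (fun _ => 1)) => [|k _]; first by rewrite sumr_const card_ord.
  by rewrite -[RHS](sum_delta_mull (fun=> 1) k); apply: eq_bigr => l _; rewrite mulr1.
have sqr_dev (m : R) (b : bool) :
  (m - b%:R * c) ^+ 2 = m ^+ 2 - 2 * c * (b%:R * m) + c ^+ 2 * b%:R.
  by case: b => /=; ring.
(* The deviation of [M] from [c I] has squared norm [N^2 / D - 2 c N + c^2 D = 0]. *)
have dev0 : \sum_k \sum_l (M k l - (k == l)%:R * c) ^+ 2 = 0.
  under eq_bigr => k _ do under eq_bigr => l _ do rewrite sqr_dev.
  under eq_bigr => k _ do rewrite big_split /= sumrB -!mulr_sumr.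
  rewrite big_split /= sumrB -!mulr_sumr trM card_delta frame_potentialE potZ /c.
  by field.
have row_ge0 k : 0 <= \sum_l (M k l - (k == l)%:R * c) ^+ 2.
  by apply: sumr_ge0 => l _; exact: sqr_ge0.
have row_i0 := psumr_eq0P (fun k _ => row_ge0 k) dev0 (i := i) isT.
have /eqP := psumr_eq0P (fun l _ => sqr_ge0 _) row_i0 (i := j) isT.
by rewrite sqrf_eq0 subr_eq0 => /eqP.
Qed.

Lemma antipodal_mono_avg Z a : Z != [::] ->
  (forall i j, \sum_(z <- Z) z 0 i * z 0 j = (i == j)%:R * ((size Z)%:R / D%:R)) ->
  (expo_deg a <= 3)%N ->
  (size (Z ++ [seq - z | z <- Z]))%:R^-1 * \sum_(y <- Z ++ [seq - z | z <- Z]) mono_eval a y =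
  sphere_mono_avg R a.
Proof.
move=> Z0 tightZ deg_a; have N_gt0 : (0 : R) < (size Z)%:R by rewrite ltr0n lt0n size_eq0.
have N_neq0 := lt0r_neq0 N_gt0.
rewrite sum_mono_eval_antipodal size_cat size_map -signr_odd.
have [odd_a|even_a] := boolP (odd (expo_deg a)).
  by rewrite sphere_mono_avg_odd // expr1 subrr mul0r mulr0.
rewrite expr0 natrD mulrA (_ : _ * (1 + 1) = (size Z)%:R^-1); last first.
  by field; rewrite N_neq0 lt0r_neq0 ?addr_gt0.
have [/expo_deg0 ->|/expo_deg2 [i [j ->]]] : expo_deg a = 0%N \/ expo_deg a = 2%N.
- by move: deg_a even_a; case: (expo_deg a) => [|[|[|[|]]]]; auto.
- under eq_bigr do rewrite mono_eval0.
  by rewrite sphere_mono_avg0 (_ : \sum_(z <- Z) 1 = (size Z)%:R) ?mulVf // -sum1_size natr_sum.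
- under eq_bigr do rewrite mono_eval_quadratic.
  by rewrite tightZ sphere_mono_avg_quadratic mulrCA mulKf.
Qed.

Lemma on_sphereN z : on_sphere (- z) = on_sphere z.
Proof. by congr (_ == 1); apply: eq_bigr => i _; rewrite mxE; exact: mulrNN. Qed.

Lemma antipodal_design3 Z : Z != [::] -> all (@on_sphere R D) Z ->
  \sum_(z <- Z) \sum_(w <- Z) dotv z w ^+ 2 = (size Z)%:R ^+ 2 / D%:R ->
  spherical_design 3 (Z ++ [seq - z | z <- Z]).
Proof.
move=> Z0 Z1 potZ; split.
- by case: Z Z0 {Z1 potZ}.
- by rewrite all_cat Z1 /=; apply/allP => _ /mapP [z /(allP Z1) z1 ->]; rewrite on_sphereN.
- move=> p deg_p; rewrite /peval /sphere_avg exchange_big /= mulr_sumr.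
  apply: eq_big_seq => m m_p; rewrite -mulr_sumr mulrCA antipodal_mono_avg //.
    exact: tight_frame_of_potential.
  exact: (allP deg_p).
Qed.
End AntipodalDesign.

Lemma double_sum_sqr_affine (R : rcfType) (T : Type) (X : seq T) (t : T -> T -> R) (a b : R) :
  \sum_(x <- X) \sum_(y <- X) (a * t x y ^+ 2 + b) ^+ 2 =
  a ^+ 2 * \sum_(x <- X) \sum_(y <- X) t x y ^+ 4
  + 2 * a * b * \sum_(x <- X) \sum_(y <- X) t x y ^+ 2 + b ^+ 2 * (size X)%:R ^+ 2.
Proof.
have sum_const (c : R) : \sum_(x <- X) c = c * (size X)%:R.
  by rewrite -sum1_size natr_sum mulr_sumr; under [RHS]eq_bigr do rewrite mulr1.
have expand (u : R) : (a * u ^+ 2 + b) ^+ 2 = a ^+ 2 * u ^+ 4 + 2 * a * b * u ^+ 2 + b ^+ 2.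
  by ring.
under eq_bigr => x _ do
  rewrite (eq_bigr _ (fun y _ => expand (t x y))) !big_split /= -!mulr_sumr sum_const.
by rewrite !big_split /= -!mulr_sumr sum_const mulrA -expr2.
Qed.

Lemma natr_half_dim (R : rcfType) d : ((d * (d + 3))./2)%:R = d%:R * (d%:R + 3) / 2 :> R.
Proof.
have even_dim : ~~ odd (d * (d + 3)) by rewrite oddM oddD /=; case: (odd d).
have dimE : (d * (d + 3))%N = ((d * (d + 3))./2 * 2)%N.
  by rewrite -[LHS]odd_double_half (negPf even_dim) add0n -muln2.
by rewrite -natrD -natrM [in RHS]dimE natrM mulfK // pnatr_eq0.
Qed.

Lemma frame_potential_of_moments (R : rcfType) (T : Type) (X : seq T) (t : T -> T -> R) d :
  (0 < d)%N -> (0 < size X)%N ->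
  (size X)%:R ^- 2 * \sum_(x <- X) \sum_(y <- X) t x y ^+ 2 = (d.+1)%:R^-1 ->
  (size X)%:R ^- 2 * \sum_(x <- X) \sum_(y <- X) t x y ^+ 4 = 3%:R / ((d + 3)%:R * (d + 1)%:R) ->
  \sum_(x <- X) \sum_(y <- X) ((d.+1)%:R / d%:R * t x y ^+ 2 + (- d%:R^-1)) ^+ 2 =
  (size X)%:R ^+ 2 / ((d * (d + 3))./2)%:R.
Proof.
move=> d_gt0 N_gt0 moment2 moment4.
have N2_neq0 : (size X)%:R ^+ 2 != 0 :> R by rewrite expf_neq0 // pnatr_eq0 -lt0n.
have sum2 : \sum_(x <- X) \sum_(y <- X) t x y ^+ 2 = (size X)%:R ^+ 2 / (d.+1)%:R.
  by rewrite -moment2 mulrA mulfV ?mul1r.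
have sum4 : \sum_(x <- X) \sum_(y <- X) t x y ^+ 4 =
    (size X)%:R ^+ 2 * (3%:R / ((d + 3)%:R * (d + 1)%:R)).
  by rewrite -moment4 mulrA mulfV ?mul1r.
have d_pos : (0 : R) < d%:R by rewrite ltr0n.
rewrite double_sum_sqr_affine sum2 sum4 natr_half_dim -!natr1 !natrD.
by field; rewrite !lt0r_neq0 ?addr_gt0.
Qed.

Unset Implicit Arguments.
Set Strict Implicit.

Theorem theorem1p2 (R : rcfType) (d : nat) (hd : (1 <= d)%N)
  (X : seq 'rV[R]_d.+1)
  (hXne : X != [::]) (hXuniq : uniq X) (hXS : all (@on_sphere R d.+1) X)
  (h2 : (size X)%:R ^- 2 * \sum_(x <- X) \sum_(y <- X) dotv x y ^+ 2
        = (d.+1)%:R^-1)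
  (h4 : (size X)%:R ^- 2 * \sum_(x <- X) \sum_(y <- X) dotv x y ^+ 4
        = 3%:R / ((d + 3)%:R * (d + 1)%:R))
  (* K : x |-> K_x, the reproducing element of Harm_2(S^d) at x *)
  (K : 'rV[R]_d.+1 -> 'M[R]_d.+1)
  (hKh : forall x, on_sphere x -> harm2 (K x))
  (hKrep : forall x, on_sphere x -> forall Q, harm2 Q ->
           harm_inner (K x) Q = (x *m Q *m x^T) 0 0)
  (* E : an orthonormal basis of Harm_2(S^d), D = d(d+3)/2 *)
  (E : 'I_((d * (d + 3))./2) -> 'M[R]_d.+1)
  (hEh : forall i, harm2 (E i))
  (hEon : forall i j, harm_inner (E i) (E j) = (i == j)%:R)
  (hEspan : forall Q, harm2 Q -> Q = \sum_i harm_inner Q (E i) *: E i) :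
  let G := fun x => (Num.sqrt (harm_inner (K x) (K x)))^-1 *: K x in
  let coord := fun x => \row_(i < (d * (d + 3))./2) harm_inner (G x) (E i) in
  spherical_design 3 ([seq coord x | x <- X] ++ [seq - coord x | x <- X]).
Proof.
move=> G coord; have d_gt0 : (0 : R) < d%:R by rewrite ltr0n.
have gram x y : x \in X -> y \in X ->
    dotv (coord x) (coord y) = (d.+1)%:R / d%:R * dotv x y ^+ 2 + (- d%:R^-1).
  move=> /(allP hXS) x1 /(allP hXS) y1.
  rewrite (dotv_coord hEh hEspan) ?harm2Z ?hKh //.
  rewrite (harm_inner_normalized_kernel hEh hEspan hKh hKrep) //.
  by rewrite -natr1 addrK; field; rewrite lt0r_neq0.
rewrite (_ : [seq - coord x | x <- X] = [seq - z | z <- [seq coord x | x <- X]]);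
  last by rewrite -map_comp.
apply: antipodal_design3.
- by rewrite -size_eq0 size_map size_eq0.
- apply/allP => _ /mapP [x xX ->]; apply/eqP.
  by rewrite gram // (eqP (allP hXS x xX)) expr1n -natr1; field; rewrite lt0r_neq0.
rewrite size_map big_map.
under eq_big_seq => x xX do
  rewrite big_map (eq_big_seq _ (fun y yX => congr1 (fun r => r ^+ 2) (gram x y xX yX))).
by apply: frame_potential_of_moments; rewrite // lt0n size_eq0.
Qed.
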